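(* Let $n,a,t\in\mathbb N$ with $t<a<n$. Let $\mathcal F\subseteq\binom{[n]}{a}$ be an ideal of the partial order $\preceq_a$ and let $\mathcal G\subseteq\binom{[n]}{a}$. Then the following are equivalent: (a) $|F\cap G|\le t$ for all $F\in\mathcal F$, $G\in\mathcal G$; (b) $L_{t+1}(G)\not\preceq_{t+1}R_{t+1}(F)$ for all $F\in\mathcal F$ and $G\in\mathcal G$.
   Context: $[n]=\{1,\dots,n\}$, $\binom{[n]}{l}$ is the family of $l$-element subsets of $[n]$. For $X\subseteq[n]$ and $1\le i\le|X|$, $m(X,i)$ is the $i$-th smallest element of $X$. For $l\in[n]$, the partial order $\preceq_l$ on $\binom{[n]}{l}$ is defined by $X\preceq_l Y$ iff $m(X,i)\le m(Y,i)$ for all $1\le i\le l$. An ideal of a poset is a downward-closed subset. For $X\in\binom{[n]}{a}$ and $j\le a$, $L_j(X)=\{m(X,i):1\le i\le j\}$ (the $j$ smallest elements of $X$) and $R_j(X)=\{m(X,i):a-j+1\le i\le a\}$ (the $j$ largest elements of $X$). *)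

(* The ground set [n] = {1,...,n} is represented by 'I_n,
   the element x : 'I_n standing for the integer x+1. *)
From mathcomp Require Import all_boot.
Set Implicit Arguments. Unset Strict Implicit. Unset Printing Implicit Defensive.

Definition sseq n (X : {set 'I_n}) : seq nat :=
  sort leq [seq (val x).+1 | x <- enum X].

(* m(X,i): the i-th smallest element of X (1 <= i <= |X|) *)
Definition melt n (X : {set 'I_n}) (i : nat) : nat := nth 0 (sseq X) i.-1.

Definition precl (l : nat) n (X Y : {set 'I_n}) : bool :=
  [forall i : 'I_l, melt X i.+1 <= melt Y i.+1].

Definition lsets n (l : nat) (F : {set {set 'I_n}}) : bool :=
  F \subset [set X : {set 'I_n} | #|X| == l].

Definition is_ideal n (l : nat) (F : {set {set 'I_n}}) : Prop :=
  lsets l F /\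
  forall X Y : {set 'I_n}, #|X| = l -> Y \in F -> precl l X Y -> X \in F.

Definition Lj n (j : nat) (X : {set 'I_n}) : {set 'I_n} :=
  [set x : 'I_n | has (fun i => (val x).+1 == melt X i) (iota 1 j)].

Definition Rj n (j : nat) (X : {set 'I_n}) : {set 'I_n} :=
  [set x : 'I_n | has (fun i => (val x).+1 == melt X i) (iota (#|X| - j).+1 j)].

From mathcomp Require Import all_boot zify.
Set Implicit Arguments. Unset Strict Implicit. Unset Printing Implicit Defensive.

(* Between l-sets, X ⪯_l Y says that for every v, X has at least as many
   elements <= v as Y.  Put k = a - t - 1, so that R_{t+1}(X) is X without its
   k smallest elements.  If |X ∩ Y| > t, at most k elements of X lie outside Y,
   and counting elements below v gives L_{t+1}(Y) ⪯ R_{t+1}(X).  Conversely, if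
   L := L_{t+1}(Y) ⪯ R_{t+1}(X), then L together with the k smallest elements
   outside L is an a-set X' ⪯_a X; as F is an ideal, X' ∈ F, while
   |X' ∩ Y| >= |L| = t + 1. *)

Lemma sorted_leq_nth_count (s : seq nat) i v : sorted leq s -> i < size s ->
  (nth 0 s i <= v) = (i < count (leq^~ v) s).
Proof.
elim: s i => [|x s IH] i //= s_sorted lt_i_s.
have x_le_s : all (leq x) s by exact: order_path_min leq_trans s_sorted.
have count_gt v' : v' < x -> count (leq^~ v') s = 0.
  move=> lt_v'x; apply/eqP; rewrite -leqn0 leqNgt -has_count; apply/hasPn => y ys.
  by rewrite -ltnNge (leq_trans lt_v'x) //; apply: (allP x_le_s).
case: i lt_i_s => [|i] lt_i_s /=.
  by case: (leqP x v) => //= lt_vx; rewrite count_gt.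
rewrite IH ?(path_sorted s_sorted) //.
by case: (leqP x v) => [_ | lt_vx]; rewrite ?add1n // count_gt.
Qed.

Section Counting.
Variable n : nat.
Implicit Types (A B X Y Z L : {set 'I_n}) (x : 'I_n).

(* x : 'I_n stands for x + 1 in [n], so [cnt Z v] is the number of elements of
   Z that are at most v, and [rank Z x] is the position of x in Z, i.e.
   m(Z, rank Z x) = x + 1 for x in Z. *)
Definition below v : {set 'I_n} := [set x | val x < v].

Definition cnt Z v := #|Z :&: below v|.

Definition rank Z x := cnt Z (val x).+1.

Definition take_set k Z := [set x in Z | rank Z x <= k].

Definition drop_set k Z := [set x in Z | k < rank Z x].

Lemma cnt_le_card Z v : cnt Z v <= #|Z|.
Proof. exact/subset_leq_card/subsetIl. Qed.

Lemma cnt_le_below Z v : cnt Z v <= #|below v|.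
Proof. exact/subset_leq_card/subsetIr. Qed.

Lemma cnt_full Z v : n <= v -> cnt Z v = #|Z|.
Proof.
move=> le_nv; rewrite /cnt (setIidPl _) //; apply/subsetP => x _.
by rewrite inE (leq_trans (ltn_ord x)).
Qed.

Lemma cntS Z x : rank Z x = cnt Z x + (x \in Z).
Proof.
rewrite /rank /cnt (cardsD1 x) !inE ltnSn andbT addnC; congr (_ + _).
apply/eq_card => y; rewrite !inE ltnS leq_eqVlt -val_eqE.
by case: eqP => [->|]; rewrite ?ltnn ?andbF.
Qed.

Lemma cnt_stepP v :
  (exists2 o : 'I_n, val o = v & forall Z, cnt Z v.+1 = cnt Z v + (o \in Z))
  \/ (forall Z, cnt Z v.+1 = cnt Z v).
Proof.
case: (ltnP v n) => [lt_vn | le_nv].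
  by left; exists (Ordinal lt_vn) => // Z; exact: (cntS Z (Ordinal lt_vn)).
by right => Z; rewrite !cnt_full // ltnW.
Qed.

Lemma subset_leq_cnt A B v : A \subset B -> cnt A v <= cnt B v.
Proof. by move=> sAB; apply/subset_leq_card/setSI. Qed.

Lemma cnt_ID A B v : cnt (A :&: B) v + cnt (A :\: B) v = cnt A v.
Proof.
rewrite /cnt -(cardsID B (A :&: below v)) !setDE.
by rewrite (setIAC _ B) (setIAC _ (~: B)).
Qed.

Lemma cnt_setC Z v : cnt Z v + cnt (~: Z) v = #|below v|.
Proof. by have := cnt_ID setT Z v; rewrite setTI setTD /cnt setTI. Qed.

Lemma cnt0 Z : cnt Z 0 = 0.
Proof.
by apply/eqP; rewrite cards_eq0 -subset0; apply/subsetP => x; rewrite !inE andbF.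
Qed.

Lemma cnt_take k Z v : cnt (take_set k Z) v = minn (cnt Z v) k.
Proof.
elim: v => [|v IH]; first by rewrite !cnt0 ?min0n.
case: (cnt_stepP v) => [[o vo step] | step]; rewrite !step // IH inE cntS vo.
by case: (o \in Z) => /=; lia.
Qed.

Lemma cnt_drop k Z v : cnt (drop_set k Z) v = cnt Z v - k.
Proof.
elim: v => [|v IH]; first by rewrite !cnt0.
case: (cnt_stepP v) => [[o vo step] | step]; rewrite !step // IH inE cntS vo.
by case: (o \in Z) => /=; lia.
Qed.

Lemma take_set_sub k Z : take_set k Z \subset Z.
Proof. by apply/subsetP => x; rewrite inE => /andP[]. Qed.

Lemma card_take k Z : #|take_set k Z| = minn #|Z| k.
Proof. by rewrite -(cnt_full _ (leqnn n)) cnt_take cnt_full. Qed.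

Lemma card_drop k Z : #|drop_set k Z| = #|Z| - k.
Proof. by rewrite -(cnt_full _ (leqnn n)) cnt_drop cnt_full. Qed.

Lemma cnt_sseq Z v : cnt Z v = count (leq^~ v) (sseq Z).
Proof.
rewrite /sseq count_sort count_map -size_filter.
have /card_uniqP <- :=
  filter_uniq (preim (fun x => (val x).+1) (leq^~ v)) (enum_uniq (mem Z)).
by apply: eq_card => x; rewrite mem_filter mem_enum !inE andbC.
Qed.

Lemma melt_le Z i v : 0 < i -> i <= #|Z| -> (melt Z i <= v) = (i <= cnt Z v).
Proof.
move=> i_gt0 le_iZ; rewrite /melt cnt_sseq sorted_leq_nth_count ?prednK //.
  exact: (sort_sorted leq_total).
by rewrite /sseq size_sort size_map -cardE.
Qed.

Lemma melt_eq Z i x : 0 < i ->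
  (melt Z i == (val x).+1) = (x \in Z) && (rank Z x == i).
Proof.
move=> i_gt0; case: (leqP i #|Z|) => [le_iZ | lt_Zi].
  rewrite eqn_leq ltnNge !melt_le // -/(rank Z x) cntS.
  by case: (x \in Z) => /=; lia.
have -> : melt Z i = 0.
  by rewrite /melt nth_default // /sseq size_sort size_map -cardE -ltnS prednK.
have := cnt_le_card Z (val x).+1; rewrite -/(rank Z x).
by case: (x \in Z) => //= le_rZ; rewrite (ltn_eqF (leq_ltn_trans le_rZ lt_Zi)).
Qed.

Lemma has_melt_iota m k Z x : 0 < m ->
  has (fun i => (val x).+1 == melt Z i) (iota m k) =
  (x \in Z) && (m <= rank Z x < m + k).
Proof.
move=> m_gt0; rewrite (eq_in_has (a2 := fun i => (x \in Z) && (i == rank Z x))).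
  by case: (x \in Z); rewrite /= ?has_pred1 ?mem_iota ?has_pred0.
move=> i; rewrite mem_iota => /andP[le_mi _].
by rewrite eq_sym melt_eq ?(leq_trans m_gt0 le_mi) // eq_sym.
Qed.

Lemma LjE j Y : Lj j Y = take_set j Y.
Proof.
apply/setP => x; rewrite !inE has_melt_iota // cntS.
by case: (x \in Y) => //=; lia.
Qed.

Lemma RjE j X : j <= #|X| -> Rj j X = drop_set (#|X| - j) X.
Proof.
move=> le_jX; apply/setP => x; rewrite !inE has_melt_iota //.
have := cnt_le_card X (val x).+1; rewrite -/(rank X x).
by case: (x \in X) => //=; lia.
Qed.

Lemma card_Lj j Y : j <= #|Y| -> #|Lj j Y| = j.
Proof. by move=> le_jY; rewrite LjE card_take; lia. Qed.

Lemma card_Rj j X : j <= #|X| -> #|Rj j X| = j.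
Proof. by move=> le_jX; rewrite RjE // card_drop; lia. Qed.

Lemma preclP l X Y : #|X| = l -> #|Y| = l ->
  reflect (forall v, cnt Y v <= cnt X v) (precl l X Y).
Proof.
move=> cardX cardY; apply: (iffP forallP) => [le_melt v | le_cnt i].
  have : cnt Y v <= l by rewrite -cardY cnt_le_card.
  case def_m: (cnt Y v) => [//|m] lt_ml.
  rewrite -melt_le ?cardX //; apply: leq_trans (le_melt (Ordinal lt_ml)) _.
  by rewrite melt_le ?cardY ?def_m.
have lt_il : i < l := ltn_ord i.
rewrite melt_le ?cardX //; apply: leq_trans (le_cnt _) => /=.
by rewrite -melt_le ?cardY.
Qed.

Lemma precl_Lj_Rj j X Y : j <= #|X :&: Y| -> precl j (Lj j Y) (Rj j X).
Proof.
move=> le_jXY.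
have le_jX : j <= #|X| := leq_trans le_jXY (subset_leq_card (subsetIl X Y)).
have le_jY : j <= #|Y| := leq_trans le_jXY (subset_leq_card (subsetIr X Y)).
apply/(preclP (card_Lj le_jY) (card_Rj le_jX)) => v.
rewrite LjE RjE // cnt_take cnt_drop.
have cnt_XY : cnt X v <= cnt Y v + #|X :\: Y|.
  by rewrite -(cnt_ID X Y) leq_add ?subset_leq_cnt ?subsetIr ?cnt_le_card.
have := cardsID Y X; have := cnt_le_card X v; lia.
Qed.

Lemma precl_extend j X L : #|L| = j -> j <= #|X| -> precl j L (Rj j X) ->
  exists X', [/\ #|X'| = #|X|, precl #|X| X' X & L \subset X'].
Proof.
move=> cardL le_jX /(preclP cardL (card_Rj le_jX)); rewrite RjE // => dom_L.
set k := #|X| - j; set X' := L :|: take_set k (~: L).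
have cnt_X' v : cnt X' v = cnt L v + minn (cnt (~: L) v) k.
  rewrite -(cnt_ID X' L) setUK setDUl setDv set0U (setDidPl _) ?cnt_take //.
  by rewrite disjoints_subset take_set_sub.
have cardX' : #|X'| = #|X|.
  rewrite -(cnt_full X' (leqnn n)) cnt_X' !cnt_full // cardL.
  have := cardsC L; have := max_card X; rewrite card_ord cardL /k; lia.
exists X'; split=> //; last exact: subsetUl.
apply/(preclP cardX' erefl) => v; rewrite cnt_X'.
have := dom_L v; have := cnt_setC L v; have := cnt_le_below X v.
rewrite cnt_drop /k; lia.
Qed.

End Counting.

Theorem lemma3 (n a t : nat) (F G : {set {set 'I_n}}) :
  t < a -> a < n ->
  is_ideal a F -> lsets a G ->
  ((forall X Y, X \in F -> Y \in G -> #|X :&: Y| <= t) <->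
   (forall X Y, X \in F -> Y \in G -> ~~ precl t.+1 (Lj t.+1 Y) (Rj t.+1 X))).
Proof.
move=> lt_ta _ [F_a F_down] G_a.
have card_of (H : {set {set 'I_n}}) Z : lsets a H -> Z \in H -> #|Z| = a.
  by move=> /subsetP H_a /H_a; rewrite inE => /eqP.
split=> [small_cap X Y XF YG | no_precl X Y XF YG].
  have cardX := card_of F X F_a XF; have cardY := card_of G Y G_a YG.
  have cardL : #|Lj t.+1 Y| = t.+1 by rewrite card_Lj ?cardY.
  apply/negP => /(precl_extend cardL); rewrite cardX => /(_ lt_ta).
  case=> X' [cardX' dom_X' sub_X'].
  have X'F : X' \in F by apply: F_down dom_X'.
  have := small_cap X' Y X'F YG; apply/negP; rewrite -ltnNge -cardL.
  by apply: subset_leq_card; rewrite subsetI sub_X' LjE take_set_sub.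
by rewrite leqNgt; apply: contra (no_precl X Y XF YG); apply: precl_Lj_Rj.
Qed.
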